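(* Let $G$ and $H$ be finite groups and $k$ a positive integer such that $\mu(H)\subseteq\mu(G)$ and $|\mu(G)\setminus\mu(H)|<k$. Then $\omega(G^k)=\omega(G^{k-1}\times H)$, where $G^m$ denotes the direct product of $m$ copies of $G$.
   Context: For a finite group $X$, $\omega(X)$ is the set of orders of elements of $X$, and $\mu(X)$ is the set of elements of $\omega(X)$ that are maximal with respect to divisibility. *)

From HB Require Import structures.
From mathcomp Require Import all_boot all_fingroup.
Set Implicit Arguments. Unset Strict Implicit. Unset Printing Implicit Defensive.
Local Open Scope group_scope.

Definition omega (gT : finGroupType) : seq nat :=
  undup [seq #[x] | x : gT].

Definition mu (gT : finGroupType) : seq nat :=
  [seq n <- omega gT | all (fun m => (n %| m)%N ==> (m == n)) (omega gT)].

Definition gpow (gT : finGroupType) (m : nat) : finGroupType :=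
  {dffun forall i : 'I_m, gT}.

From HB Require Import structures.
From mathcomp Require Import all_boot all_fingroup cyclic.

(* The orders of G^m are exactly the lcms of m-tuples of elements of omega(G),
   and omega(G) is closed under divisors.  Every order v of G divides some
   maximal order M(v) in mu(G).  Given an m-tuple of orders of G with
   m >= k, either some M(v_i) lies in mu(H), and then v_i is an order of H
   and can be moved to the H factor; or all the M(v_i) lie in
   mu(G) \ mu(H), which has fewer than k elements, so M(v_i) = M(v_j) for
   some i <> j, and lcm(v_i, v_j), a divisor of M(v_i), is a single order of
   G: two factors of G merge and the H factor is left trivial.  Conversely
   mu(H) <= mu(G) gives omega(H) <= omega(G), so G can replace H. *)

Set Implicit Arguments. Unset Strict Implicit. Unset Printing Implicit Defensive.
Local Open Scope group_scope.

Section ElementOrders.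

Variable gT : finGroupType.

Lemma omegaP n : reflect (exists x : gT, #[x] = n) (n \in omega gT).
Proof.
rewrite /omega mem_undup; apply: (iffP mapP) => [[x _ ->]|[x <-]]; first by exists x.
by exists x; rewrite ?mem_enum.
Qed.

Lemma omega1 : 1%N \in omega gT.
Proof. by apply/omegaP; exists 1; rewrite order1. Qed.

Lemma omega_dvd d n : (d %| n)%N -> n \in omega gT -> d \in omega gT.
Proof.
move=> dvd_dn /omegaP[x ox]; apply/omegaP; exists (x ^+ (n %/ d)).
have n_gt0 : (0 < n)%N by rewrite -ox order_gt0.
by rewrite orderXdiv ox ?dvdn_div // divnA // mulKn.
Qed.

Lemma mu_omega : {subset mu gT <= omega gT}.
Proof. by move=> n; rewrite mem_filter => /andP[]. Qed.

Lemma has_mu_multiple v : v \in omega gT -> has (dvdn v) (mu gT).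
Proof.
move=> omega_v; apply/hasP.
pose P m := (m \in omega gT) && (v %| m)%N.
have P_bounded m : P m -> (m <= #|gT|)%N by case/andP=> /omegaP[x <-] _; exact: max_card.
have P_v : exists m, P m by exists v; rewrite /P omega_v dvdnn.
have [m /andP[omega_m dvd_vm] max_m] := ex_maxnP P_v P_bounded.
exists m => //; rewrite mem_filter omega_m andbT.
apply/allP => m' omega_m'; apply/implyP => dvd_mm'.
have m'_gt0 : (0 < m')%N by case/omegaP: omega_m' => x <-; rewrite order_gt0.
rewrite eqn_leq (dvdn_leq m'_gt0 dvd_mm') andbT.
by apply: max_m; rewrite /P omega_m' (dvdn_trans dvd_vm dvd_mm').
Qed.

Definition mu_multiple v := nth 0%N (mu gT) (find (dvdn v) (mu gT)).

Lemma mu_multipleP v : v \in omega gT -> mu_multiple v \in mu gT /\ (v %| mu_multiple v)%N.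
Proof.
move=> /has_mu_multiple has_v; split; last exact: nth_find.
by rewrite mem_nth // -has_find.
Qed.

Definition elt_of_order n : gT := odflt 1 [pick x : gT | #[x] == n].

Lemma order_elt_of_order n : n \in omega gT -> #[elt_of_order n] = n.
Proof.
move=> /omegaP[x ox]; rewrite /elt_of_order; case: pickP => [y /eqP //|none].
by have := none x; rewrite ox eqxx.
Qed.

End ElementOrders.

Lemma omega_sub_of_mu_sub (G H : finGroupType) :
  {subset mu H <= mu G} -> {subset omega H <= omega G}.
Proof.
move=> sub_mu v /has_mu_multiple/hasP[m mu_m dvd_vm].
exact: omega_dvd dvd_vm (mu_omega (sub_mu m mu_m)).
Qed.

Lemma expg_dffun (I : finType) (gT : I -> finGroupType)
    (x : {dffun forall i, gT i}) i n :
  (x ^+ n) i = x i ^+ n.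
Proof. by elim: n => [|n IHn]; rewrite ?expg0 ?oneg_ffun // !expgS mulg_ffun IHn. Qed.

Lemma order_dffun (I : finType) (gT : finGroupType) (x : {dffun forall i : I, gT}) :
  #[x] = \big[lcmn/1%N]_i #[x i].
Proof.
apply/eqP; rewrite eqn_dvd; apply/andP; split.
  rewrite order_dvdn; apply/eqP/ffunP => i; rewrite expg_dffun oneg_ffun; apply/eqP.
  by rewrite -order_dvdn (biglcmn_sup i).
by apply/dvdn_biglcmP => i _; rewrite order_dvdn -expg_dffun expg_order oneg_ffun.
Qed.

Lemma expg_pair (A B : finGroupType) (p : (A * B)%type) n :
  p ^+ n = (p.1 ^+ n, p.2 ^+ n).
Proof. by elim: n => [|n IHn]; rewrite ?expg0 // !expgS IHn. Qed.

Lemma order_pair (A B : finGroupType) (p : (A * B)%type) :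
  #[p] = lcmn #[p.1] #[p.2].
Proof.
apply/eqP; rewrite eqn_dvd; apply/andP; split.
  rewrite order_dvdn expg_pair; apply/eqP; congr pair; apply/eqP;
    by rewrite -order_dvdn ?dvdn_lcml ?dvdn_lcmr.
have := expg_order p; rewrite expg_pair => -[p1_exp p2_exp].
by rewrite dvdn_lcm !order_dvdn p1_exp p2_exp !eqxx.
Qed.

Definition lcm_seq (s : seq nat) := \big[lcmn/1%N]_(v <- s) v.

Lemma lcm_seq_cons v s : lcm_seq (v :: s) = lcmn v (lcm_seq s).
Proof. by rewrite /lcm_seq big_cons. Qed.

Lemma perm_lcm_seq s t : perm_eq s t -> lcm_seq s = lcm_seq t.
Proof. by move=> perm_st; rewrite /lcm_seq (perm_big _ perm_st). Qed.

Lemma omega_gpowP (gT : finGroupType) m n :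
  reflect (exists2 s, size s = m /\ {subset s <= omega gT} & n = lcm_seq s)
          (n \in omega (gpow gT m)).
Proof.
apply: (iffP (omegaP _ _)) => [[x <-]|[s [size_s omega_s] ->]].
  exists [seq #[x i] | i <- enum 'I_m]; last by rewrite /lcm_seq big_map big_enum order_dffun.
  by split=> [|v /mapP[i _ ->]]; [rewrite size_map size_enum_ord | apply/omegaP; exists (x i)].
exists ([ffun i : 'I_m => elt_of_order gT (nth 0%N s i)] : gpow gT m).
rewrite order_dffun /lcm_seq (big_nth 0%N) big_mkord size_s; apply: eq_bigr => i _.
by rewrite ffunE order_elt_of_order // omega_s // mem_nth // size_s.
Qed.

Lemma omega_pairP (A B : finGroupType) n :
  reflect (exists a b, [/\ a \in omega A, b \in omega B & n = lcmn a b])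
          (n \in omega (A * B)%type).
Proof.
apply: (iffP (omegaP _ _)) => [[p <-]|[a [b [omega_a omega_b ->]]]].
  by exists #[p.1], #[p.2]; rewrite order_pair; split=> //; apply/omegaP; eexists.
by exists (elt_of_order A a, elt_of_order B b); rewrite order_pair /= !order_elt_of_order.
Qed.

Lemma not_uniq_map_perm (T : eqType) (U : eqType) (f : T -> U) s :
  ~~ uniq (map f s) -> exists a b t, perm_eq s [:: a, b & t] /\ f a = f b.
Proof.
elim: s => [//|x s IHs] /=; rewrite negb_and negbK => /orP[/mapP[b s_b fxb]|/IHs].
  by exists x, b, (rem b s); rewrite perm_cons perm_to_rem.
case=> a [b [t [perm_s fab]]]; exists a, b, (x :: t); split=> //.
apply: (@perm_trans _ [:: x, a, b & t]); first by rewrite perm_cons.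
by rewrite (perm_catCA [:: x] [:: a; b] t).
Qed.

Lemma lcm_seq_split (G H : finGroupType) (s : seq nat) :
  size [seq n <- mu G | n \notin mu H] < size s -> {subset s <= omega G} ->
  exists2 t, size t = (size s).-1 /\ {subset t <= omega G} &
    exists2 h, h \in omega H & lcm_seq s = lcmn (lcm_seq t) h.
Proof.
move=> small_diff omega_s.
have [|] := boolP (has (fun v => mu_multiple G v \in mu H) s).
  case/hasP=> v s_v mu_Mv.
  have [_ dvd_vM] := mu_multipleP (omega_s v s_v).
  exists (rem v s); first by split=> [|w /mem_rem]; [rewrite size_rem | apply: omega_s].
  exists v; first exact: omega_dvd dvd_vM (mu_omega mu_Mv).
  by rewrite lcmnC -lcm_seq_cons; apply/perm_lcm_seq/perm_to_rem.
move/hasPn=> not_mu_H.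
have : ~~ uniq (map (mu_multiple G) s).
  apply: contraL small_diff => uniq_M; rewrite -leqNgt -(size_map (mu_multiple G)).
  apply: uniq_leq_size uniq_M _ => _ /mapP[v s_v ->].
  by rewrite mem_filter not_mu_H //; case: (mu_multipleP (omega_s v s_v)).
case/not_uniq_map_perm=> a [b [t [perm_s M_ab]]].
have s_a : a \in s by rewrite (perm_mem perm_s) inE eqxx.
have s_b : b \in s by rewrite (perm_mem perm_s) !inE eqxx orbT.
have [mu_Ma dvd_aM] := mu_multipleP (omega_s a s_a).
have [_ dvd_bM] := mu_multipleP (omega_s b s_b).
exists (lcmn a b :: t); first split.
- by rewrite (perm_size perm_s).
- move=> w; rewrite inE => /predU1P[->|t_w].
    by apply: omega_dvd (mu_omega mu_Ma); rewrite dvdn_lcm dvd_aM M_ab.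
  by apply: omega_s; rewrite (perm_mem perm_s) !inE t_w !orbT.
exists 1%N; first exact: omega1.
by rewrite lcmn1 (perm_lcm_seq perm_s) !lcm_seq_cons lcmnA.
Qed.

Lemma omega_gpow_sub_prod (G H : finGroupType) m :
  size [seq n <- mu G | n \notin mu H] <= m ->
  {subset omega (gpow G m.+1) <= omega (gpow G m * H)%type}.
Proof.
move=> small_diff n /omega_gpowP[s [size_s omega_s] ->].
have [|t [size_t omega_t] [h omega_h ->]] := @lcm_seq_split G H s _ omega_s; first by rewrite size_s.
apply/omega_pairP; exists (lcm_seq t), h; split=> //.
by apply/omega_gpowP; exists t; rewrite // size_t size_s.
Qed.

Lemma omega_prod_sub_gpow (G H : finGroupType) m :
  {subset omega H <= omega G} ->
  {subset omega (gpow G m * H)%type <= omega (gpow G m.+1)}.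
Proof.
move=> sub_omega n /omega_pairP[_ [h [/omega_gpowP[s [size_s omega_s] ->] omega_h ->]]].
apply/omega_gpowP; exists (rcons s h); last first.
  have perm_rcons_cons : perm_eq (rcons s h) (h :: s) by rewrite perm_rcons.
  by rewrite (perm_lcm_seq perm_rcons_cons) lcm_seq_cons lcmnC.
split=> [|w]; first by rewrite size_rcons size_s.
by rewrite mem_rcons => /predU1P[->|]; [apply: sub_omega | apply: omega_s].
Qed.

Theorem lemma3p1 (G H : finGroupType) (k : nat) :
  0 < k ->
  {subset mu H <= mu G} ->
  size [seq n <- mu G | n \notin mu H] < k ->
  omega (gpow G k) =i omega (gpow G k.-1 * H)%type.
Proof.
case: k => [//|k] _ sub_mu small_diff n /=.
apply/idP/idP; first exact: omega_gpow_sub_prod.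
exact/omega_prod_sub_gpow/omega_sub_of_mu_sub.
Qed.
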